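(* Let $w\in\{0,1\}^n$ be a random variable satisfying the $\epsilon$-martingale condition. Then \[ \Pr[w\text{ is forkable}]=\Pr[\mu(w)\ge0]\le\exp(-\Omega(n)). \]
   Context: Characteristic strings and forks. A characteristic string is $w=w_1\dots w_n\in\{0,1\}^n$; index $i$ is honest if $w_i=0$ and adversarial if $w_i=1$. A fork for $w$ is a rooted tree with edges directed away from the root $r$ and labeling $\ell:V\to\{0,\dots,n\}$ with (F1) $\ell(r)=0$; (F2) labels strictly increasing along directed paths; (F3) each honest index labels exactly one vertex; (F4) for honest $i<j$ the vertex labeled $i$ has strictly smaller depth than the vertex labeled $j$. Write $F\vdash w$. A vertex is honest if it is the root or labeled by an honest index. A tine is a directed path from the root; its length is its number of edges, $\ell(t)$ the label of its last vertex; $\mathrm{height}(F)$ is the maximum tine length. A fork is closed if every leaf is honest; a closed fork has a unique longest tine $\hat t$. For closed $F\vdash w$ and tine $t$: $\mathrm{gap}(t)=\mathrm{length}(\hat t)-\mathrm{length}(t)$, $\mathrm{reserve}(t)=|\{i:w_i=1,\ i>\ell(t)\}|$, $\mathrm{reach}(t)=\mathrm{reserve}(t)-\mathrm{gap}(t)$. Two tines are disjoint if they share no edge (a tine may be paired with itself). $\mu(F)=\max\min\{\mathrm{reach}(t_1),\mathrm{reach}(t_2)\}$ over disjoint pairs, and $\mu(w)=\max\{\mu(F):F\vdash w\text{ closed}\}$. A fork $F$ is balanced if it contains two disjoint tines $t_1,t_2$ with $\mathrm{length}(t_1)=\mathrm{length}(t_2)=\mathrm{height}(F)$; $w$ is forkable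 if there is a balanced fork for $w$ (equivalently $\mu(w)\ge0$). A random variable $W\in\{0,1\}^n$ satisfies the $\epsilon$-martingale condition ($\epsilon\in(0,1)$) if for every $t$, $\Pr[W_t=1\mid W_1,\dots,W_{t-1}]\le(1-\epsilon)/2$. The asymptotic constant may depend on $\epsilon$. *)

From HB Require Import structures.
From mathcomp Require Import all_boot all_order all_algebra.
From mathcomp Require Import boolp reals sequences exp.
Set Implicit Arguments. Unset Strict Implicit. Unset Printing Implicit Defensive.
Import Order.TTheory GRing.Theory Num.Theory.

(* A characteristic string w = w_1 ... w_n is an n.-tuple of booleans;
   w_i (1 <= i <= n) is  nth false w i.-1 ; true = 1 (adversarial),
   false = 0 (honest). *)
Definition wbit n (w : n.-tuple bool) (i : nat) : bool := nth false w i.-1.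
Definition honest_idx n (w : n.-tuple bool) (i : nat) : bool :=
  (1 <= i <= n) && ~~ wbit w i.
Definition adv_idx n (w : n.-tuple bool) (i : nat) : bool :=
  (1 <= i <= n) && wbit w i.

(* A finite rooted tree on the vertex set 'I_m.+1, root = ord0, given by a
   parent map (the parent of the root is irrelevant); the directed edges are
   (par v, v) for v <> root.  lab is the labeling. *)
Record tree := Tree { tsz : nat; par : 'I_tsz.+1 -> 'I_tsz.+1;
                      lab : 'I_tsz.+1 -> nat }.

Definition root (F : tree) : 'I_(tsz F).+1 := ord0.

Definition child (F : tree) (a b : 'I_(tsz F).+1) : bool :=
  (b != root F) && (par b == a).

(* a tine: directed path from the root, given by the vertices after the root *)
Definition tine (F : tree) (s : seq 'I_(tsz F).+1) : bool := path (@child F) (root F) s.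
Definition tine_len (F : tree) (s : seq 'I_(tsz F).+1) : nat := size s.
Definition tine_lab (F : tree) (s : seq 'I_(tsz F).+1) : nat := lab (last (root F) s).
Definition tine_edges (F : tree) (s : seq 'I_(tsz F).+1) :=
  zip (root F :: s) s.
Definition disjoint_tines (F : tree) (s1 s2 : seq 'I_(tsz F).+1) : bool :=
  all (fun e => e \notin tine_edges s2) (tine_edges s1).

Definition is_fork n (w : n.-tuple bool) (F : tree) : Prop :=
  [/\ (forall v : 'I_(tsz F).+1, lab v <= n),
      lab (root F) = 0,
      (forall v, v != root F -> lab (par v) < lab v),
      (forall i, honest_idx w i -> #|[pred v : 'I_(tsz F).+1 | lab v == i]| = 1) &
      (forall (s1 s2 : seq 'I_(tsz F).+1) i j, tine s1 -> tine s2 -> honest_idx w i ->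
                 honest_idx w j -> i < j -> tine_lab s1 = i -> tine_lab s2 = j ->
                 tine_len s1 < tine_len s2) ].

Definition is_height (F : tree) (h : nat) : Prop :=
  (exists s : seq 'I_(tsz F).+1, tine s /\ tine_len s = h) /\
  (forall s : seq 'I_(tsz F).+1, tine s -> tine_len s <= h).

Definition balanced (F : tree) : Prop :=
  exists h, is_height F h /\
    exists s1 s2 : seq 'I_(tsz F).+1, [/\ tine s1, tine s2, disjoint_tines s1 s2,
                      tine_len s1 = h & tine_len s2 = h].

Definition forkable n (w : n.-tuple bool) : Prop :=
  exists F, is_fork w F /\ balanced F.

Definition honest_vertex n (w : n.-tuple bool) (F : tree) (v : 'I_(tsz F).+1) :=
  (v == root F) || honest_idx w (lab v).
Definition is_leaf (F : tree) (v : 'I_(tsz F).+1) : bool :=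
  [forall u, ~~ child v u].
Definition closed_fork n (w : n.-tuple bool) (F : tree) : Prop :=
  forall v : 'I_(tsz F).+1, is_leaf v -> honest_vertex w v.

(* reserve, gap (relative to height h = length of the longest tine), reach *)
Definition reserve n (w : n.-tuple bool) (F : tree) (s : seq 'I_(tsz F).+1) : nat :=
  count (fun i => adv_idx w i && (tine_lab s < i)) (iota 1 n).
Definition reach n (w : n.-tuple bool) (F : tree) (h : nat)
  (s : seq 'I_(tsz F).+1) : int :=
  ((reserve w s)%:Z - (h%:Z - (tine_len s)%:Z))%R.

(* mu(w) >= 0 : some closed fork for w has a pair of disjoint tines whose
   minimal reach is nonnegative (mu(w) is a max of integers bounded above by n
   over a nonempty family, so it is attained). *)
Definition mu_nonneg n (w : n.-tuple bool) : Prop :=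
  exists F, [/\ is_fork w F, closed_fork w F &
    exists h, is_height F h /\
      exists s1 s2 : seq 'I_(tsz F).+1, [/\ tine s1, tine s2, disjoint_tines s1 s2 &
        (0 <= Num.min (reach w h s1) (reach w h s2))%R]].

Section Prob.
Context {R : realType}.
Local Open Scope ring_scope.

Definition is_distr n (P : n.-tuple bool -> R) : Prop :=
  (forall w, 0 <= P w) /\ \sum_(w : n.-tuple bool) P w = 1.

Definition eps_martingale n (eps : R) (P : n.-tuple bool -> R) : Prop :=
  forall (t : nat) (b : seq bool), (1 <= t <= n)%N -> size b = t.-1 ->
    \sum_(w : n.-tuple bool | (take t.-1 w == b) && wbit w t) P w <=
    (1 - eps) / 2 * \sum_(w : n.-tuple bool | take t.-1 w == b) P w.

Definition prob n (P : n.-tuple bool -> R) (E : n.-tuple bool -> Prop) : R :=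
  \sum_(w : n.-tuple bool | `[< E w >]) P w.
End Prob.

From Pilot Require Import Defs.
From HB Require Import structures.
From mathcomp Require Import all_boot all_order all_algebra.
From mathcomp Require Import boolp reals sequences exp.
From mathcomp Require Import zify ring lra.
Import Order.TTheory GRing.Theory Num.Theory.
Set Implicit Arguments. Unset Strict Implicit. Unset Printing Implicit Defensive.

(* Deleting an adversarial leaf of a fork never decreases the reach of a tine:
   the tine loses one vertex and regains the leaf's label as reserve.
   Conversely, a tine of nonnegative reach shorter than the height has reserve,
   and attaching one vertex labelled by the first adversarial index after its
   tip keeps its reach; repeating this makes both tines of a pair longest.

   For the bound, let X_t be the number of honest minus adversarial indices
   among the first t.  If i is a Catalan slot (X_s < X_i for s < i and
   X_i <= X_s for i <= s <= n), every longest tine of every fork passes through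
   the unique vertex labelled i, so two longest tines share an edge and w is not
   forkable.  The counters (G, E) of [step] exhibit a Catalan slot whenever
   G > 0 at the end.  Under the eps-martingale condition the potential
   gamma^G theta^E shrinks in expectation by a factor lambda < 1 per step, and it
   is at least 1 when G = 0; hence Pr[forkable] <= lambda^n. *)

Section Tines.
Variable F : tree.
Local Notation V := ('I_(tsz F).+1).
Local Notation rt := (Defs.root F).

Lemma childP (a b : V) : child a b -> a = par b /\ b != rt.
Proof. by case/andP=> nb /eqP <-. Qed.

Lemma tine_rcons (s : seq V) x : tine (rcons s x) = tine s && child (last rt s) x.
Proof. exact: rcons_path. Qed.

Lemma tine_catl (s1 s2 : seq V) : tine (s1 ++ s2) -> tine s1.
Proof. by rewrite /tine cat_path => /andP[]. Qed.

Lemma mem_tine_neq_root (s : seq V) x : tine s -> x \in s -> x != rt.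
Proof.
move=> Ts /splitPr in_s; case: in_s Ts => p1 p2.
by rewrite /tine cat_path /= => /and3P[_ /childP[]].
Qed.

Lemma last_tine_neq_root (s : seq V) : tine s -> s != [::] -> last rt s != rt.
Proof.
case/lastP: s => [//|s x] Ts _; apply: mem_tine_neq_root Ts _.
by rewrite last_rcons mem_rcons mem_head.
Qed.

Lemma tine_last_inj (s1 s2 : seq V) :
  tine s1 -> tine s2 -> last rt s1 = last rt s2 -> s1 = s2.
Proof.
have nil_last (s : seq V) : tine s -> last rt s = rt -> s = [::].
  by case: s => [//|x s] Ts /eqP; apply/contraTeq/last_tine_neq_root.
elim/last_ind: s1 s2 => [|s1 x IH] s2 T1 T2 E; first exact/esym/nil_last.
case/lastP: s2 T2 E => [|s2 y] T2 E; first by have := nil_last _ T1 E; case: s1 {IH T1 E}.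
move: T1 T2 E; rewrite !tine_rcons !last_rcons => /andP[T1 /childP[E1 _]].
move=> /andP[T2 /childP[E2 _]] Exy; subst y.
by rewrite (IH s2 T1 T2 (etrans E1 (esym E2))).
Qed.

Lemma tine_edges_rcons (s : seq V) x :
  tine_edges (rcons s x) = rcons (tine_edges s) (last rt s, x).
Proof. by rewrite /tine_edges; elim: s rt => [//|y s IH] r /=; rewrite IH. Qed.

Lemma disjoint_tines_sym (s1 s2 : seq V) :
  disjoint_tines s1 s2 -> disjoint_tines s2 s1.
Proof.
move=> /allP D; apply/allP => e e2; apply/negP => e1.
by have := D e e1; rewrite e2.
Qed.

Lemma disjoint_tines_rconsl (s t : seq V) x :
  disjoint_tines (rcons s x) t -> disjoint_tines s t.
Proof. by rewrite /disjoint_tines tine_edges_rcons all_rcons => /andP[]. Qed.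

Lemma disjoint_tines_rconsr (s t : seq V) x :
  disjoint_tines s (rcons t x) -> disjoint_tines s t.
Proof. by move=> /disjoint_tines_sym/disjoint_tines_rconsl/disjoint_tines_sym. Qed.

Lemma par_edge_in_tine (s : seq V) x : tine s -> x \in s -> (par x, x) \in tine_edges s.
Proof.
move=> Ts /splitPr in_s; case: in_s Ts => p1 p2.
rewrite -cat_rcons /tine cat_path rcons_path => /andP[/andP[_ /childP[<- _]] _].
rewrite /tine_edges; elim: p1 rt => [|y p1 IH] r /=; first by rewrite mem_head.
by rewrite in_cons IH orbT.
Qed.

Hypothesis lab_par : forall v : V, v != rt -> lab (par v) < lab v.

Lemma lab_last_lt (s : seq V) x : tine (rcons s x) -> lab (last rt s) < lab x.
Proof. by rewrite tine_rcons => /andP[_ /childP[-> /lab_par]]. Qed.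

Lemma lab_last_catl (p q : seq V) :
  tine (p ++ q) -> lab (last rt p) <= lab (last rt (p ++ q)).
Proof.
elim/last_ind: q => [|q y IH]; first by rewrite cats0.
rewrite -rcons_cat => T; have /ltnW lt := lab_last_lt T.
by move: T; rewrite tine_rcons last_rcons => /andP[/IH/leq_trans->].
Qed.

(* Labels strictly decrease towards the root, so [lab v + 1] steps reach it. *)
Fixpoint ancestors (k : nat) (v : V) : seq V :=
  if k is k'.+1 then (if v == rt then [::] else rcons (ancestors k' (par v)) v)
  else [::].

Definition tine_to (v : V) := ancestors (lab v).+1 v.
Definition depth (v : V) := size (tine_to v).

Lemma ancestorsP k v : lab v < k -> tine (ancestors k v) /\ last rt (ancestors k v) = v.
Proof.
elim: k v => [//|k IH] v /= lt; case: eqP => [-> //|/eqP nv].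
have [T L] := IH (par v) (leq_trans (lab_par nv) (ltnSE lt)).
by rewrite tine_rcons last_rcons T L /child nv /= eqxx.
Qed.

Lemma tine_toP v : tine (tine_to v) /\ last rt (tine_to v) = v.
Proof. exact: ancestorsP. Qed.

Lemma tine_to_last (s : seq V) : tine s -> tine_to (last rt s) = s.
Proof. by move=> Ts; have [T' L] := tine_toP (last rt s); apply: tine_last_inj. Qed.

Lemma depth_last (s : seq V) : tine s -> depth (last rt s) = size s.
Proof. by move=> Ts; rewrite /depth tine_to_last. Qed.

Lemma depth_root : depth rt = 0.
Proof. by rewrite /depth /tine_to /=. Qed.

Lemma depth_gt0 v : v != rt -> 0 < depth v.
Proof. by move=> nv; rewrite /depth /tine_to /= (negbTE nv) size_rcons. Qed.

End Tines.

Lemma card_lift m (v : 'I_m.+2) (P : pred 'I_m.+2) :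
  #|[pred u | P u]| = P v + #|[pred j : 'I_m.+1 | P (lift v j)]|.
Proof.
rewrite -!sum1_card !big_mkcond /= (bigD1_ord v) //=.
by rewrite [in RHS]big_mkcond /= !inE; case: (P v).
Qed.

(* [S] is [B] with the adversarial leaf [v] deleted; vertices of [S] are
   renumbered through [lift v]. *)
Section DeleteLeaf.
Variables (n m : nat) (w : n.-tuple bool).
Variables (parB : 'I_m.+2 -> 'I_m.+2) (labB : 'I_m.+2 -> nat).
Variables (parS : 'I_m.+1 -> 'I_m.+1) (labS : 'I_m.+1 -> nat).
Variable v : 'I_m.+2.
Hypothesis v_neq0 : v != ord0.
Hypothesis v_leaf : forall u, u != ord0 -> parB u != v.
Hypothesis labS_lift : forall j, labS j = labB (lift v j).
Hypothesis parS_lift : forall j, j != ord0 -> parB (lift v j) = lift v (parS j).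
Hypothesis v_adversarial : ~~ honest_idx w (labB v).

Local Notation B := (@Tree m.+1 parB labB).
Local Notation S := (@Tree m parS labS).
Local Notation e := (lift v).

Lemma lift_ord0 : e ord0 = ord0.
Proof. by apply/val_inj; rewrite /= /bump leqNgt lt0n v_neq0. Qed.

Lemma lift_eq0 j : (e j == ord0) = (j == ord0).
Proof. by rewrite -lift_ord0 (inj_eq lift_inj). Qed.

Lemma child_lift a b : @child S a b = @child B (e a) (e b).
Proof.
rewrite /child /= /Defs.root /= lift_eq0.
by case: eqP => //= /eqP nb; rewrite parS_lift // (inj_eq lift_inj).
Qed.

Lemma tine_lift (s : seq 'I_m.+1) : @tine S s = @tine B (map e s).
Proof.
rewrite /tine /Defs.root /= -lift_ord0.
by elim: s ord0 => [//|x s IH] r /=; rewrite IH child_lift.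
Qed.

Lemma last_lift (s : seq 'I_m.+1) : last ord0 (map e s) = e (last ord0 s).
Proof. by rewrite -{1}lift_ord0 last_map. Qed.

Lemma tine_lab_lift (s : seq 'I_m.+1) : @tine_lab S s = @tine_lab B (map e s).
Proof. by rewrite /tine_lab /Defs.root /= last_lift labS_lift. Qed.

Lemma reserve_lift (s : seq 'I_m.+1) :
  reserve w (F := S) s = reserve w (F := B) (map e s).
Proof. by rewrite /reserve tine_lab_lift. Qed.

Lemma tine_edges_lift (s : seq 'I_m.+1) :
  @tine_edges B (map e s) = map (fun p => (e p.1, e p.2)) (@tine_edges S s).
Proof.
rewrite /tine_edges /Defs.root /= -lift_ord0.
by elim: s ord0 => [//|x s IH] r /=; rewrite IH.
Qed.

Lemma disjoint_tines_lift (s1 s2 : seq 'I_m.+1) :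
  @disjoint_tines S s1 s2 = @disjoint_tines B (map e s1) (map e s2).
Proof.
rewrite /disjoint_tines !tine_edges_lift all_map; apply: eq_all => p /=.
rewrite mem_map // => -[a b] [c d] /= E.
by rewrite (lift_inj (f_equal fst E)) (lift_inj (f_equal snd E)).
Qed.

Definition unlift_v (u : 'I_m.+2) : 'I_m.+1 := odflt ord0 (unlift v u).

Lemma unlift_vK u : u != v -> e (unlift_v u) = u.
Proof. by rewrite eq_sym => /unlift_some[j -> E]; rewrite /unlift_v E. Qed.

Lemma tine_avoiding_leaf (T : seq 'I_m.+2) : @tine B T -> v \notin T ->
  exists s, T = map e s /\ @tine S s.
Proof.
move=> TT nT; have ET : map e (map unlift_v T) = T.
  elim: T nT {TT} => [//|x T IH] /=; rewrite in_cons negb_or => /andP[nx nT].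
  by rewrite unlift_vK 1?eq_sym // IH.
by exists (map unlift_v T); rewrite tine_lift ET.
Qed.

Lemma tine_through_leaf (T : seq 'I_m.+2) : @tine B T -> v \in T ->
  exists s, T = rcons (map e s) v /\ @tine S s.
Proof.
move=> TT /splitPr vT; case: vT TT => p1 p2 TT.
have no_child (q : seq 'I_m.+2) : path (@child B) v q -> q = [::].
  by case: q => [//|y q] /= /andP[/childP[/= E /v_leaf]]; rewrite -E eqxx.
have p2nil : p2 = [::].
  by apply: no_child; move: TT; rewrite /tine cat_path /= => /and3P[].
subst p2; rewrite cats1 in TT *.
have nv : v \notin p1.
  apply/negP=> /splitPr vp; case: vp TT => q1 q2.
  rewrite rcons_cat /tine cat_path /= => /and3P[_ _ /no_child].
  by case: q2.
move: TT; rewrite tine_rcons => /andP[Tp _].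
by have [s [-> Ts]] := tine_avoiding_leaf Tp nv; exists s.
Qed.

Lemma honest_card_lift i : honest_idx w i ->
  #|[pred u : 'I_m.+2 | labB u == i]| = #|[pred j : 'I_m.+1 | labS j == i]|.
Proof.
move=> hi; rewrite (card_lift v) /=.
have -> : (labB v == i) = false by apply: contraNF v_adversarial => /eqP->.
by apply: eq_card => j; rewrite !inE labS_lift.
Qed.

Lemma fork_delete_leaf : is_fork w B -> is_fork w S.
Proof.
case=> L0 L1 L2 L3 L4; split.
- by move=> j; rewrite /= labS_lift.
- by rewrite /Defs.root /= labS_lift lift_ord0.
- move=> j nj /=; rewrite !labS_lift -parS_lift //; apply: L2.
  by rewrite /Defs.root /= lift_eq0.
- by move=> i hi; rewrite -honest_card_lift // L3.
- move=> s1 s2 i j T1 T2 hi hj ij E1 E2.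
  rewrite /tine_len -(size_map e s1) -(size_map e s2).
  by apply: (L4 _ _ i j) => //; rewrite -?tine_lift -?tine_lab_lift.
Qed.

Lemma honest_tine_avoids_leaf (T : seq 'I_m.+2) :
  @tine B T -> honest_idx w (@tine_lab B T) -> v \notin T.
Proof.
move=> TT hT; apply/negP => /(tine_through_leaf TT)[s [E _]].
by move: hT; rewrite E /tine_lab last_rcons (negbTE v_adversarial).
Qed.

Hypothesis labB_v : labB v <= n.
Hypothesis lab_par_v : labB (parB v) < labB v.

Lemma fork_insert_leaf : is_fork w S -> is_fork w B.
Proof.
case=> L0 L1 L2 L3 L4; split.
- move=> u /=; case: (eqVneq u v) => [-> //|nu].
  by rewrite -(unlift_vK nu) -labS_lift.
- by move: L1; rewrite /Defs.root /= -lift_ord0 -labS_lift.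
- move=> u /= nu; case: (eqVneq u v) => [-> //|nv].
  have nj : unlift_v u != ord0 by rewrite -lift_eq0 unlift_vK.
  by rewrite -(unlift_vK nv) parS_lift // -!labS_lift; apply: L2.
- by move=> i hi; rewrite honest_card_lift // L3.
- move=> T1 T2 i j TT1 TT2 hi hj ij E1 E2.
  have /(honest_tine_avoids_leaf TT1) /(tine_avoiding_leaf TT1) [s1 [ET1 Ts1]] :
    honest_idx w (@tine_lab B T1) by rewrite E1.
  have /(honest_tine_avoids_leaf TT2) /(tine_avoiding_leaf TT2) [s2 [ET2 Ts2]] :
    honest_idx w (@tine_lab B T2) by rewrite E2.
  subst T1 T2; rewrite /tine_len !size_map.
  by apply: (L4 _ _ i j) => //; rewrite tine_lab_lift.
Qed.
End DeleteLeaf.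

Section Reserve.
Variables (n : nat) (w : n.-tuple bool).

Definition adv_after (a : nat) := count (fun i => adv_idx w i && (a < i)) (iota 1 n).

Lemma reserveE (F : tree) (s : seq 'I_(tsz F).+1) : reserve w s = adv_after (tine_lab s).
Proof. by []. Qed.

Lemma adv_idx_range i : adv_idx w i -> 0 < i <= n.
Proof. by case/andP. Qed.

Lemma adv_idxN_honest i : 0 < i <= n -> ~~ honest_idx w i -> adv_idx w i.
Proof. by rewrite /honest_idx /adv_idx => ->; rewrite negbK. Qed.

Lemma adv_after_split a b : a <= b ->
  adv_after a = adv_after b + count (fun i => adv_idx w i && (a < i) && (i <= b)) (iota 1 n).
Proof.
move=> ab; rewrite /adv_after; elim: (iota 1 n) => //= x s ->.
case: (adv_idx w x) => //=; case: (ltnP b x) => bx; case: (ltnP a x) => ax /=; lia.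
Qed.

Lemma adv_after_lt a b : a < b -> adv_idx w b -> (adv_after b).+1 <= adv_after a.
Proof.
move=> ab advb; rewrite (adv_after_split (ltnW ab)) -[(adv_after b).+1]addn1 leq_add2l.
rewrite -has_count.
apply/hasP; exists b; last by rewrite advb ab leqnn.
by have := adv_idx_range advb; rewrite mem_iota; lia.
Qed.

Lemma adv_after_next a b : a < b -> adv_idx w b ->
  (forall i, adv_idx w i -> a < i -> b <= i) -> adv_after a = (adv_after b).+1.
Proof.
move=> ab advb bmin; rewrite (adv_after_split (ltnW ab)) -[(adv_after b).+1]addn1.
congr (_ + _).
transitivity (count (pred1 b) (iota 1 n)); last first.
  rewrite count_uniq_mem ?iota_uniq // mem_iota.
  by have := adv_idx_range advb => /andP[b1 bn]; rewrite b1 /=; apply/eqP; apply/idP; lia.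
apply: eq_count => i /=; apply/idP/eqP => [/andP[/andP[advi ai] ib]|->].
  by apply/eqP; rewrite eqn_leq ib bmin.
by rewrite advb ab leqnn.
Qed.
End Reserve.

Section Reach.
Variables (n : nat) (w : n.-tuple bool) (F : tree).

Lemma reserve_gt0_of_reach h (s : seq 'I_(tsz F).+1) :
  size s < h -> (0 <= reach w h s)%R -> 0 < reserve w s.
Proof. rewrite /reach /tine_len; lia. Qed.

Lemma reach_height_antimono h h' (s : seq 'I_(tsz F).+1) :
  h' <= h -> (reach w h s <= reach w h' s)%R.
Proof. rewrite /reach; lia. Qed.

Lemma reach_le_shorter h (F' : tree) (s : seq 'I_(tsz F).+1) (s' : seq 'I_(tsz F').+1) :
  size s = (size s').+1 -> (reserve w s).+1 <= reserve w s' ->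
  (reach w h s <= reach w h s')%R.
Proof. rewrite /reach /tine_len; lia. Qed.

Lemma reach_extend h (F' : tree) (s : seq 'I_(tsz F).+1) (s' : seq 'I_(tsz F').+1) :
  size s' = (size s).+1 -> reserve w s = (reserve w s').+1 -> reach w h s' = reach w h s.
Proof. rewrite /reach /tine_len; lia. Qed.

Definition height_le h := forall T : seq 'I_(tsz F).+1, tine T -> size T <= h.

Definition reaching_pair h (s1 s2 : seq 'I_(tsz F).+1) :=
  [/\ tine s1, tine s2, disjoint_tines s1 s2,
      (0 <= reach w h s1)%R & (0 <= reach w h s2)%R].

Definition reaching_fork h :=
  [/\ is_fork w F, height_le h & exists s1 s2, reaching_pair h s1 s2].

Lemma reaching_pair_sym h s1 s2 : reaching_pair h s1 s2 -> reaching_pair h s2 s1.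
Proof. by case=> T1 T2 /disjoint_tines_sym D R1 R2; split. Qed.

Lemma height_exists h : height_le h -> exists2 h', is_height F h' & h' <= h.
Proof.
move=> HT; pose P k := `[< exists T : seq 'I_(tsz F).+1, tine T /\ size T = k >].
have exP : exists k, P k by exists 0; apply/asboolP; exists [::].
have ubP k : P k -> k <= h by move=> /asboolP[T [/HT + <-]].
case: (ex_maxnP exP ubP) => i /asboolP[T [TT ST]] imax.
exists i; last by rewrite -ST HT.
by split=> [|s Ts]; [exists T | apply/imax/asboolP; exists s].
Qed.
End Reach.

Definition delete_par m (parB : 'I_m.+2 -> 'I_m.+2) (v : 'I_m.+2) (j : 'I_m.+1) :=
  odflt ord0 (unlift v (parB (lift v j))).

Section PruneLeaf.
Variables (n : nat) (w : n.-tuple bool) (h m : nat).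
Variables (parB : 'I_m.+2 -> 'I_m.+2) (labB : 'I_m.+2 -> nat) (v : 'I_m.+2).
Local Notation B := (@Tree m.+1 parB labB).
Local Notation parS := (delete_par parB v).
Local Notation labS := (fun j => labB (lift v j)).
Local Notation S := (@Tree m parS labS).
Hypothesis v_neq0 : v != ord0.
Hypothesis v_leaf : @is_leaf B v.
Hypothesis v_adversarial : ~~ honest_vertex w (F := B) v.

Lemma no_child_v u : u != ord0 -> parB u != v.
Proof. by move=> nu; move/forallP: v_leaf => /(_ u); rewrite /child /= nu. Qed.

Lemma delete_par_lift j : j != ord0 -> parB (lift v j) = lift v (parS j).
Proof.
move=> nj; rewrite /delete_par; have : v != parB (lift v j).
  by rewrite eq_sym; apply: no_child_v; rewrite lift_eq0.
by case/unlift_some => k E ->.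
Qed.

Lemma v_adversarial_idx : ~~ honest_idx w (labB v).
Proof. by move: v_adversarial; rewrite /honest_vertex negb_or => /andP[]. Qed.

Lemma reach_delete_leaf (T : seq 'I_m.+2) : is_fork w B -> @tine B T ->
  exists s, [/\ @tine S s, T = map (lift v) s \/ T = rcons (map (lift v) s) v &
                (reach w (F := B) h T <= reach w (F := S) h s)%R].
Proof.
move=> [Ln _ lab_par _ _] TT; case: (boolP (v \in T)) => vT.
  have [s [ET Ts]] := tine_through_leaf labS v_neq0 no_child_v delete_par_lift TT vT.
  exists s; split => //; first by right.
  apply: reach_le_shorter; first by rewrite ET size_rcons size_map.
  rewrite (reserve_lift w parB parS v_neq0 (fun _ => erefl)) ET !reserveE.
  rewrite /tine_lab /Defs.root /= last_rcons.
  have lt : labB (last ord0 (map (lift v) s)) < labB v.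
    by have := @lab_last_lt B lab_par (map (lift v) s) v; rewrite -ET; apply.
  have rng : 0 < labB v <= n by rewrite Ln andbT; apply: leq_ltn_trans lt.
  exact: adv_after_lt lt (adv_idxN_honest rng v_adversarial_idx).
have [s [ET Ts]] := tine_avoiding_leaf labS v_neq0 delete_par_lift TT vT.
exists s; split => //; first by left.
by rewrite /reach /tine_len (reserve_lift w parB parS v_neq0 (fun _ => erefl)) ET size_map.
Qed.

Lemma reaching_fork_delete_leaf : reaching_fork w B h -> reaching_fork w S h.
Proof.
case=> B_fork HB [s1 [s2 [T1 T2 D R1 R2]]]; split.
- exact: (fork_delete_leaf v_neq0 (fun _ => erefl) delete_par_lift v_adversarial_idx B_fork).
- move=> s Ts; rewrite -(size_map (lift v)); apply: HB.
  by rewrite -(tine_lift labB labS v_neq0 delete_par_lift).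
have [s1' [Ts1 E1 Q1]] := reach_delete_leaf B_fork T1.
have [s2' [Ts2 E2 Q2]] := reach_delete_leaf B_fork T2.
exists s1', s2'; split => //; [|exact: le_trans R1 Q1|exact: le_trans R2 Q2].
rewrite (disjoint_tines_lift parB labB parS labS v_neq0).
have D1 : @disjoint_tines B (map (lift v) s1') s2.
  by case: E1 D => -> // /disjoint_tines_rconsl.
by case: E2 D1 => -> // /disjoint_tines_rconsr.
Qed.
End PruneLeaf.

Lemma closed_reaching_fork n (w : n.-tuple bool) h (F : tree) :
  reaching_fork w F h -> exists F', closed_fork w F' /\ reaching_fork w F' h.
Proof.
suff prune m (F' : tree) : tsz F' = m -> reaching_fork w F' h ->
    exists F'', closed_fork w F'' /\ reaching_fork w F'' h by exact: prune.
elim: m F' => [|m IH] [k par lab] /= km; subst k => RF.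
  by exists (@Tree 0 par lab); split => // u _; rewrite /honest_vertex ord1 eqxx.
pose B := @Tree m.+1 par lab.
case: (pickP (fun v => @is_leaf B v && ~~ honest_vertex w v)) => [v /andP[lv hv]|none].
  have v0 : v != ord0 by apply: contraNneq hv => ->; rewrite /honest_vertex eqxx.
  by apply: (IH _ _ (reaching_fork_delete_leaf v0 lv hv RF)).
by exists B; split => // u lu; have := none u; rewrite lu => /negbFE.
Qed.

(* [B] is [S] with a new last vertex, labelled [L], attached below [x]. *)
Section ExtendTine.
Variables (k : nat) (parS : 'I_k.+1 -> 'I_k.+1) (labS : 'I_k.+1 -> nat).
Variables (x : 'I_k.+1) (L : nat).

Definition extend_par (u : 'I_k.+2) : 'I_k.+2 :=
  if unlift ord_max u is Some j then lift ord_max (parS j) else lift ord_max x.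
Definition extend_lab (u : 'I_k.+2) : nat :=
  if unlift ord_max u is Some j then labS j else L.

Local Notation S := (@Tree k parS labS).
Local Notation B := (@Tree k.+1 extend_par extend_lab).
Local Notation v := (@ord_max k.+1).
Local Notation e := (lift v).

Lemma ord_max_neq0 : v != ord0. Proof. by []. Qed.

Lemma extend_par_neq_max u : extend_par u != v.
Proof. by rewrite /extend_par; case: (unlift _ _) => [j|]; rewrite lift_eqF. Qed.

Lemma extend_lab_lift j : labS j = extend_lab (e j).
Proof. by rewrite /extend_lab liftK. Qed.

Lemma extend_par_lift j : j != ord0 -> extend_par (e j) = e (parS j).
Proof. by rewrite /extend_par liftK. Qed.

Lemma extend_lab_max : extend_lab v = L.
Proof. by rewrite /extend_lab unlift_none. Qed.

Lemma extend_par_max : extend_par v = e x.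
Proof. by rewrite /extend_par unlift_none. Qed.

Lemma tine_extend (s : seq 'I_k.+1) :
  @tine S s -> last ord0 s = x -> @tine B (rcons (map e s) v).
Proof.
move=> Ts Ls; rewrite tine_rcons -(tine_lift extend_lab labS ord_max_neq0 extend_par_lift).
rewrite Ts /child /= extend_par_max.
by rewrite (last_lift ord_max_neq0) Ls eqxx.
Qed.

Lemma height_le_extend h (s : seq 'I_k.+1) : @tine S s -> last ord0 s = x ->
  size s < h -> height_le S h -> height_le B h.
Proof.
move=> Ts Ls lt HS T TT; case: (boolP (v \in T)) => vT.
  have [s' [ET Ts']] := tine_through_leaf labS ord_max_neq0
    (fun u _ => extend_par_neq_max u) extend_par_lift TT vT.
  move: TT; rewrite ET tine_rcons => /andP[_ /childP[/= + _]].
  rewrite extend_par_max (last_lift ord_max_neq0) => /lift_inj Ex.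
  have -> : s' = s by apply: (@tine_last_inj S) => //; rewrite /Defs.root /= Ex Ls.
  by rewrite size_rcons size_map.
have [s' [-> Ts']] := tine_avoiding_leaf labS ord_max_neq0 extend_par_lift TT vT.
by rewrite size_map HS.
Qed.

Lemma disjoint_tines_extend (s1 s2 : seq 'I_k.+1) : @disjoint_tines S s1 s2 ->
  @disjoint_tines B (rcons (map e s1) v) (map e s2).
Proof.
rewrite (disjoint_tines_lift extend_par extend_lab parS labS ord_max_neq0).
rewrite /disjoint_tines tine_edges_rcons all_rcons => ->; rewrite andbT.
rewrite (tine_edges_lift extend_par extend_lab parS labS ord_max_neq0).
by apply/mapP => -[[a b] _ /(f_equal snd)/= /esym/eqP]; rewrite lift_eqF.
Qed.

Variables (n : nat) (w : n.-tuple bool).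
Hypothesis L_adv : adv_idx w L.
Hypothesis x_lt_L : labS x < L.

Lemma fork_extend : is_fork w S -> is_fork w B.
Proof.
have /adv_idx_range/andP[_ Ln] := L_adv.
apply: (fork_insert_leaf ord_max_neq0 (fun u _ => extend_par_neq_max u)
  extend_lab_lift extend_par_lift); rewrite ?extend_lab_max //.
- by move: L_adv; rewrite /adv_idx /honest_idx => /andP[-> ->].
- by rewrite extend_par_max -extend_lab_lift.
Qed.
End ExtendTine.

Definition balancing_pair n (w : n.-tuple bool) h (F : tree) (s1 s2 : seq 'I_(tsz F).+1) :=
  [/\ is_fork w F, height_le F h,
      exists T : seq 'I_(tsz F).+1, tine T /\ size T = h & reaching_pair w h s1 s2].

Lemma balancing_pair_sym n (w : n.-tuple bool) h (F : tree) (s1 s2 : seq 'I_(tsz F).+1) :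
  balancing_pair w h s1 s2 -> balancing_pair w h s2 s1.
Proof. by case=> FF HF hT /reaching_pair_sym. Qed.

Lemma balancing_pair_extend n (w : n.-tuple bool) h (F : tree) (s1 s2 : seq 'I_(tsz F).+1) :
  balancing_pair w h s1 s2 -> size s1 < h ->
  exists F' (s1' s2' : seq 'I_(tsz F').+1), [/\ balancing_pair w h s1' s2',
    size s1' = (size s1).+1 & size s2' = size s2].
Proof.
case: F s1 s2 => k parS labS /= s1 s2 [FS HS [T [TT ST]] [Ts1 Ts2 D R1 R2]] lt.
set x := last ord0 s1.
have /hasP[i _ Pi] : has (fun i => adv_idx w i && (labS x < i)) (iota 1 n).
  by rewrite has_count; have := reserve_gt0_of_reach (F := @Tree k parS labS) lt R1.
have exP : exists i, adv_idx w i && (labS x < i) by exists i.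
case: (ex_minnP exP) => L /andP[advL xL] minL.
pose B := @Tree k.+1 (extend_par parS x) (extend_lab labS L).
have labS_lift := extend_lab_lift labS L.
have parS_lift := extend_par_lift parS x.
have tineE := tine_lift (extend_lab labS L) labS (ord_max_neq0 k) parS_lift.
have reserve_mapE := reserve_lift w (extend_par parS x) parS (ord_max_neq0 k) labS_lift.
exists B, (rcons (map (lift ord_max) s1) ord_max), (map (lift ord_max) s2).
rewrite size_rcons !size_map; split => //; split.
- exact: fork_extend.
- exact: height_le_extend Ts1 erefl lt HS.
- by exists (map (lift ord_max) T); rewrite size_map -tineE.
split.
- exact: tine_extend.
- by rewrite -tineE.
- exact: disjoint_tines_extend.
- rewrite (@reach_extend n w (@Tree k parS labS) h B s1) ?size_rcons ?size_map //.
  rewrite !reserveE /tine_lab last_rcons /= extend_lab_max.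
  by apply: adv_after_next => // j advj xj; apply: minL; rewrite advj.
- by rewrite /reach /tine_len -reserve_mapE size_map.
Qed.

Lemma balancing_pair_forkable n (w : n.-tuple bool) h (F : tree) (s1 s2 : seq 'I_(tsz F).+1) :
  balancing_pair w h s1 s2 -> forkable w.
Proof.
move: {2}((h - size s1) + (h - size s2)) (erefl ((h - size s1) + (h - size s2))) => d.
elim: d F s1 s2 => [|d IH] F s1 s2 Hd BP.
  have [FF HF [T [TT ST]] [T1 T2 D _ _]] := BP.
  have := HF _ T1; have := HF _ T2; move/eqP: Hd.
  rewrite addn_eq0 !subn_eq0 => /andP[s1h s2h] h2 h1.
  exists F; split => //; exists h; split; first by split => //; exists T.
  by exists s1, s2; split => //; apply/eqP; rewrite /tine_len eqn_leq ?s1h ?s2h ?h1 ?h2.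
have [FF HF _ [T1 T2 _ _ _]] := BP; have h1 := HF _ T1; have h2 := HF _ T2.
case: (ltnP (size s1) h) => l1.
  have [F' [s1' [s2' [BP' E1 E2]]]] := balancing_pair_extend BP l1.
  by apply: (IH F' s1' s2') => //; move: Hd; rewrite E1 E2; lia.
have l2 : size s2 < h by move: Hd; lia.
have [F' [s2' [s1' [BP' E2 E1]]]] := balancing_pair_extend (balancing_pair_sym BP) l2.
by apply: (IH F' s1' s2' _ (balancing_pair_sym BP')); move: Hd; rewrite E1 E2; lia.
Qed.

Lemma forkable_iff_mu_nonneg n (w : n.-tuple bool) : forkable w <-> mu_nonneg w.
Proof.
split.
  case=> F [FF [h [[_ HF] [s1 [s2 [T1 T2 D S1 S2]]]]]].
  have RF : reaching_fork w F h.
    by split => //; exists s1, s2; split; rewrite // /reach ?S1 ?S2; lia.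
  have [F' [CF [FF' HF' [t1 [t2 [U1 U2 D' R1 R2]]]]]] := closed_reaching_fork RF.
  have [h' Hh' le] := height_exists HF'.
  exists F'; split => //; exists h'; split => //; exists t1, t2; split => //.
  by rewrite le_min !(le_trans _ (reach_height_antimono _ _ le)).
case=> F [FF CF [h [[[T [TT ST]] HF] [s1 [s2 [T1 T2 D]]]]]].
rewrite le_min => /andP[R1 R2].
by apply: (@balancing_pair_forkable n w h F s1 s2); split => //; exists T.
Qed.

Section Walk.
Variables (n : nat) (w : n.-tuple bool).

Definition honest_in a b := count (honest_idx w) (iota a.+1 (b - a)).
Definition adv_in a b := count (adv_idx w) (iota a.+1 (b - a)).

Definition walk t : int := (honest_in 0 t)%:Z - (adv_in 0 t)%:Z.

Lemma iota_split a b c : a <= b -> b <= c ->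
  iota a.+1 (c - a) = iota a.+1 (b - a) ++ iota b.+1 (c - b).
Proof.
move=> ab bc; have -> : c - a = (b - a) + (c - b) by lia.
by rewrite iotaD; congr (_ ++ iota _ _); lia.
Qed.

Lemma honest_inD a b c : a <= b -> b <= c -> honest_in a c = honest_in a b + honest_in b c.
Proof. by move=> ab bc; rewrite /honest_in (iota_split ab bc) count_cat. Qed.

Lemma adv_inD a b c : a <= b -> b <= c -> adv_in a c = adv_in a b + adv_in b c.
Proof. by move=> ab bc; rewrite /adv_in (iota_split ab bc) count_cat. Qed.

Lemma honest_inS a b : a <= b -> honest_in a b.+1 = honest_in a b + honest_idx w b.+1.
Proof.
by move=> ab; rewrite (honest_inD ab (leqnSn b)) /honest_in subSn // subnn /= addn0.
Qed.

Lemma adv_inS a b : a <= b -> adv_in a b.+1 = adv_in a b + adv_idx w b.+1.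
Proof. by move=> ab; rewrite (adv_inD ab (leqnSn b)) /adv_in subSn // subnn /= addn0. Qed.

Lemma honest_in_pred a c : a < c -> honest_in a c = honest_in a c.-1 + honest_idx w c.
Proof. by case: c => [//|c] ac; rewrite honest_inS. Qed.

Lemma adv_in_gt0 b c : b < c -> adv_idx w c -> 0 < adv_in b c.
Proof.
move=> bc ac; rewrite /adv_in -has_count; apply/hasP; exists c => //.
by rewrite mem_iota; lia.
Qed.

Lemma walkB a b : a <= b -> (walk b - walk a = (honest_in a b)%:Z - (adv_in a b)%:Z)%R.
Proof. by move=> ab; rewrite /walk (honest_inD (leq0n a) ab) (adv_inD (leq0n a) ab); lia. Qed.

Lemma walkS t : t < n -> walk t.+1 = (walk t + (if wbit w t.+1 then -1 else 1))%R.
Proof.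
move=> tn; rewrite /walk honest_inS // adv_inS // /honest_idx /adv_idx.
have -> : (1 <= t.+1 <= n) = true by apply/andP; split.
by case: (wbit w t.+1) => /=; lia.
Qed.

Lemma walk_up_honest i : 0 < i <= n -> (walk i.-1 < walk i)%R -> honest_idx w i.
Proof.
case: i => [//|i] /andP[_ iN]; rewrite walkS // /honest_idx iN /=.
by case: (wbit w i.+1) => /=; lia.
Qed.

Definition catalan_slot i t := [/\ 0 < i <= t,
  forall s, s < i -> (walk s < walk i)%R &
  forall s, i <= s <= t -> (walk i <= walk s)%R].
End Walk.

Section HonestDepth.
Variables (n : nat) (w : n.-tuple bool) (F : tree).
Local Notation V := ('I_(tsz F).+1).
Local Notation rt := (Defs.root F).
Hypothesis F_fork : is_fork w F.

Lemma fork_lab_le (v : V) : lab v <= n. Proof. by case: F_fork. Qed.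
Lemma fork_lab_root : lab rt = 0. Proof. by case: F_fork. Qed.
Lemma fork_lab_par (v : V) : v != rt -> lab (par v) < lab v.
Proof. by case: F_fork => _ _ + _ _; apply. Qed.

Lemma fork_lab_gt0 (v : V) : v != rt -> 0 < lab v.
Proof. by move/fork_lab_par; apply: leq_ltn_trans. Qed.

Lemma honest_lab_uniq (y z : V) : honest_idx w (lab y) -> lab y = lab z -> y = z.
Proof.
move=> hy E; have [_ _ _ H3 _] := F_fork.
have /eqP/card1P[x Ax] := H3 _ hy.
by have := Ax y; have := Ax z; rewrite !inE E eqxx => /esym/eqP -> /esym/eqP ->.
Qed.

Lemma honest_lab_exists j : honest_idx w j -> exists y : V, lab y = j.
Proof.
move=> hj; have [_ _ _ H3 _] := F_fork.
have /eqP/card1P[x Ax] := H3 _ hj.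
by exists x; have := Ax x; rewrite !inE eqxx => /eqP.
Qed.

Lemma honest_vertex_cases (y : V) :
  honest_vertex w y -> y = rt \/ (y != rt /\ honest_idx w (lab y)).
Proof. by rewrite /honest_vertex; case: (eqVneq y rt) => [->|ny] /=; [left|right]. Qed.

Lemma depth_lt_honest (y z : V) : honest_vertex w y -> honest_vertex w z ->
  lab y < lab z -> depth y < depth z.
Proof.
move=> hy hz lt.
have nz : z != rt by apply: contraTneq lt => ->; rewrite fork_lab_root.
case: (honest_vertex_cases hy) => [->|[ny hy']]; first by rewrite depth_root depth_gt0.
case: (honest_vertex_cases hz) => [E|[_ hz']]; first by move/eqP: nz.
have [_ _ _ _ H4] := F_fork.
have [Ty Ly] := tine_toP fork_lab_par y; have [Tz Lz] := tine_toP fork_lab_par z.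
by apply: (H4 _ _ (lab y) (lab z)); rewrite // /tine_lab ?Ly ?Lz.
Qed.

Lemma depth_le_honest (y z : V) : honest_vertex w y -> honest_vertex w z ->
  lab y <= lab z -> depth y <= depth z.
Proof.
move=> hy hz; rewrite leq_eqVlt => /orP[/eqP E|/(depth_lt_honest hy hz)/ltnW //].
case: (honest_vertex_cases hy) => [Ey|[ny hy']]; last by rewrite (honest_lab_uniq hy' E).
case: (honest_vertex_cases hz) => [-> |[nz _]]; first by rewrite Ey.
by move: (fork_lab_gt0 nz); rewrite -E Ey fork_lab_root.
Qed.

(* By (F4), every honest index after [lab u] adds one to the depth. *)
Lemma honest_depth_growth (u : V) j : honest_vertex w u -> lab u <= j -> j <= n ->
  exists y : V, [/\ honest_vertex w y, lab u <= lab y <= j &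
                   depth u + honest_in w (lab u) j <= depth y].
Proof.
move=> hu; elim: j => [|j IH] uj jn.
  by exists u; rewrite leqnn uj /honest_in sub0n addn0.
case: (leqP (lab u) j) => [uj'|ju]; last first.
  have E : lab u = j.+1 by lia.
  by exists u; rewrite E leqnn /honest_in subnn addn0.
have [y [hy /andP[uy yj] dy]] := IH uj' (ltnW jn).
rewrite honest_inS //; case: (boolP (honest_idx w j.+1)) => hj; last first.
  by exists y; rewrite addn0 uy (leq_trans yj).
have [z Lz] := honest_lab_exists hj.
have hz : honest_vertex w z by rewrite /honest_vertex Lz hj orbT.
exists z; rewrite Lz leqnn (leq_trans uy (leq_trans yj (leqnSn j))); split => //.
have yz : lab y < lab z by rewrite Lz ltnS.
by have := depth_lt_honest hy hz yz; move: dy; lia.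
Qed.

Lemma adversarial_segment_size (p seg : seq V) : tine (p ++ seg) ->
  ~~ has (@honest_vertex _ w F) seg ->
  size seg <= adv_in w (lab (last rt p)) (lab (last rt (p ++ seg))).
Proof.
elim/last_ind: seg => [//|seg y IH]; rewrite -rcons_cat => T NH.
have lt := lab_last_lt fork_lab_par T.
move: T; rewrite tine_rcons => /andP[T /childP[_ ny]].
have := lab_last_catl fork_lab_par T.
move: NH; rewrite has_rcons negb_or => /andP[+ /(IH T)].
rewrite /honest_vertex negb_or => /andP[_ hy].
have rng : 0 < lab y <= n by rewrite fork_lab_le fork_lab_gt0.
have advy := adv_idxN_honest rng hy.
rewrite last_rcons size_rcons; move: lt advy.
set a := lab _; set b := lab _; set c := lab y => lt advy IH' ab.
by rewrite (adv_inD w ab (ltnW lt)); have := adv_in_gt0 lt advy; lia.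
Qed.
End HonestDepth.

(* A longest tine skipping the Catalan slot [i] would, from its last honest
   vertex [u] before [i] on, use at least as many adversarial as honest
   indices, while after [lab u] the honest indices outnumber the adversarial
   ones. *)
Section SlotOnLongestTines.
Variables (n : nat) (w : n.-tuple bool) (F : tree).
Local Notation V := ('I_(tsz F).+1).
Local Notation rt := (Defs.root F).
Hypothesis F_fork : is_fork w F.
Variables (i h : nat).
Hypothesis slot : catalan_slot w i n.
Hypothesis F_height : height_le F h.

Local Notation lab_par := (fork_lab_par F_fork).

Lemma longest_tine_no_adversarial_tail (p seg : seq V) :
  tine (p ++ seg) -> size (p ++ seg) = h ->
  honest_vertex w (last rt p) -> lab (last rt p) < i ->
  ~~ has (@honest_vertex _ w F) seg -> False.
Proof.
case: slot => /andP[_ iN] walk_lt walk_ge Tt St hu lu NH.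
have du := depth_last lab_par (tine_catl Tt).
have sc := adversarial_segment_size F_fork Tt NH.
have bn := fork_lab_le F_fork (last rt (p ++ seg)).
have ab := lab_last_catl lab_par Tt.
have un := fork_lab_le F_fork (last rt p).
have [y [hy _ dy]] := honest_depth_growth F_fork hu un (leqnn n).
have yh := F_height (proj1 (tine_toP lab_par y)).
have Xn : (walk w i <= walk w n)%R by apply: walk_ge; rewrite iN leqnn.
have := walkB w un; have := walk_lt _ lu; have := adv_inD w ab bn.
by move: St dy yh; rewrite size_cat /depth in du *; lia.
Qed.

Lemma tine_no_honest_jump_over_slot (p seg : seq V) z :
  tine (rcons (p ++ seg) z) -> honest_vertex w (last rt p) -> lab (last rt p) < i ->
  ~~ has (@honest_vertex _ w F) seg -> honest_vertex w z -> i < lab z -> False.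
Proof.
case: slot => /andP[_ iN] walk_lt walk_ge Tz hu lu NH hz iz.
have := Tz; rewrite tine_rcons => /andP[Tps _].
have du := depth_last lab_par (tine_catl Tps).
have dz := depth_last lab_par Tz; rewrite last_rcons size_rcons size_cat in dz.
have sc := adversarial_segment_size F_fork Tps NH.
have bz := lab_last_lt lab_par Tz.
have ab := lab_last_catl lab_par Tps.
have zn := fork_lab_le F_fork z.
have uz := ltn_trans lu iz.
have [y [hy /andP[_ yz] dy]] := honest_depth_growth F_fork hu (ltnW uz) zn.
have dyz := depth_le_honest F_fork hy hz yz.
have nz : z != rt by apply: (mem_tine_neq_root Tz); rewrite mem_rcons mem_head.
have [E|[_ hz']] := honest_vertex_cases hz; first by rewrite E eqxx in nz.
have := honest_in_pred w uz; rewrite hz' => E0.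
have bz' : lab (last rt (p ++ seg)) <= (lab z).-1 by lia.
have uz' : lab (last rt p) <= (lab z).-1 by lia.
have Xz : (walk w i <= walk w (lab z).-1)%R by apply: walk_ge; lia.
have := adv_inD w ab bz'; have := walkB w uz'; have := walk_lt _ lu.
by move: E0 dy dyz dz du sc; lia.
Qed.

Lemma longest_tine_through_slot (t : seq V) : tine t -> size t = h ->
  exists2 x, x \in t & lab x = i.
Proof.
move=> Tt St.
case: (boolP (has (fun x => lab x == i) t)) => [/hasP[x xt /eqP]|/hasPn NI]; first by exists x.
have [/andP[i0 _] _ _] := slot.
suff /(_ [::] t erefl) : forall p q, t = p ++ q ->
    honest_vertex w (last rt p) -> lab (last rt p) < i -> False.
  by rewrite /= (fork_lab_root F_fork) /honest_vertex eqxx => /(_ isT i0).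
move=> p q; have [k] := ubnP (size q); elim: k p q => // k IH p q Sq Et hu lu.
move: Tt St; rewrite Et => Tt St.
case: (boolP (has (@honest_vertex _ w F) q)) => [hq|nq]; last first.
  exact: longest_tine_no_adversarial_tail Tt St hu lu nq.
case: (split_find hq) Et Tt St Sq => z seg rest hz nseg Et.
rewrite catA -rcons_cat !size_cat !size_rcons => Tt St Sq.
have Sr : size rest < k by lia.
have Tz : tine (rcons (p ++ seg) z) := tine_catl Tt.
case: (ltngtP (lab z) i) => [zi|iz|zi].
- by apply: (IH (rcons (p ++ seg) z) rest Sr); rewrite ?last_rcons ?Et ?catA -?rcons_cat.
- exact: tine_no_honest_jump_over_slot Tz hu lu nseg hz iz.
- by move: (NI z); rewrite Et mem_cat mem_cat mem_rcons mem_head orbT zi eqxx => /(_ isT).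
Qed.
End SlotOnLongestTines.

Lemma forkable_no_catalan_slot n (w : n.-tuple bool) i :
  forkable w -> ~ catalan_slot w i n.
Proof.
move=> [F [FF [h [[_ HF] [s1 [s2 [T1 T2 D S1 S2]]]]]]] slot.
have [x1 x1s L1] := longest_tine_through_slot FF slot HF T1 S1.
have [x2 x2s L2] := longest_tine_through_slot FF slot HF T2 S2.
have hi : honest_idx w i.
  have [/andP[i0 iN] walk_lt _] := slot.
  by apply: walk_up_honest; [rewrite i0 | apply: walk_lt; rewrite ltn_predL].
have E12 : x1 = x2 by apply: (honest_lab_uniq FF); rewrite ?L1 ?L2.
subst x2; move/allP: D => /(_ _ (par_edge_in_tine T1 x1s)).
by rewrite (par_edge_in_tine T2 x2s).
Qed.

(* The state [(G, E)] after reading a prefix of [w]: if [G > 0] then the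
   current walk value exceeds a Catalan slot by [G - 1]; the walk is never
   more than [E] below its past values. *)
Definition step (s : nat * nat) (b : bool) : nat * nat :=
  if b then (s.1.-1, s.2.+1)
  else (if (0 < s.1) || (s.2 == 0) then s.1.+1 else 0, s.2.-1).

Definition walk_state n (w : n.-tuple bool) t := foldl step (0, 0) (take t w).

Section WalkState.
Variables (n : nat) (w : n.-tuple bool).
Local Notation X := (walk w).

Lemma walk_stateS t : t < n -> walk_state w t.+1 = step (walk_state w t) (wbit w t.+1).
Proof. by move=> tn; rewrite /walk_state (take_nth false) ?size_tuple // -cats1 foldl_cat. Qed.

Lemma catalan_slotS i t : catalan_slot w i t -> (X i <= X t.+1)%R -> catalan_slot w i t.+1.
Proof.
case=> /andP[i0 it] lt ge ge'; split => //; first by rewrite i0 ltnW.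
move=> r /andP[ir]; rewrite leq_eqVlt => /orP[/eqP -> //|].
by rewrite ltnS => rt; apply/ge/andP.
Qed.

Definition state_inv t (s : nat * nat) := let: (G, E) := s in
  (forall r, r <= t -> (X r <= X t + E%:Z)%R) /\
  (0 < G -> exists i, catalan_slot w i t /\ X t = (X i + (G.-1)%:Z)%R).

Lemma state_inv_adv t s : t < n -> wbit w t.+1 -> state_inv t s ->
  state_inv t.+1 (step s true).
Proof.
move=> tn b; have := walkS w tn; rewrite b => XS; case: s => G E [HE HG] /=.
split => [r|G1].
  by rewrite leq_eqVlt => /orP[/eqP -> | /HE]; lia.
have [|i [slot EX]] := HG; first lia.
by exists i; split; [apply: catalan_slotS slot _|]; lia.
Qed.

Lemma state_inv_honest t s : t < n -> ~~ wbit w t.+1 -> state_inv t s ->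
  state_inv t.+1 (step s false).
Proof.
move=> tn b; have := walkS w tn; rewrite (negbTE b) => XS; case: s => G E [HE HG] /=.
case: ifP => C; last first.
  by split => // r; rewrite leq_eqVlt => /orP[/eqP -> | /HE]; move: C; lia.
split => [r|_]; first by rewrite leq_eqVlt => /orP[/eqP -> | /HE]; move: C; lia.
case: (posnP G) => [G0|Gp]; last first.
  have [i [slot EX]] := HG Gp.
  by exists i; split; [apply: catalan_slotS slot _|]; lia.
have E0 : E = 0 by move: C; rewrite G0 => /eqP.
exists t.+1; rewrite G0 /=; split; last lia.
split=> [|r|r /andP[tr rt]]; first by rewrite ltn0Sn leqnn.
  by rewrite ltnS => /HE; rewrite E0; lia.
by have -> : r = t.+1 by lia.
Qed.

Lemma walk_state_inv t : t <= n -> state_inv t (walk_state w t).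
Proof.
elim: t => [_|t IH tn].
  by rewrite /walk_state take0; split => // r; rewrite leqn0 => /eqP ->; lia.
rewrite walk_stateS //; case: (boolP (wbit w t.+1)) => b.
  by apply: state_inv_adv => //; apply: IH; apply: ltnW.
by apply: state_inv_honest => //; apply: IH; apply: ltnW.
Qed.
End WalkState.

Lemma forkable_walk_state n (w : n.-tuple bool) : forkable w -> (walk_state w n).1 = 0.
Proof.
move=> Fw; have := walk_state_inv w (leqnn n).
case: (walk_state w n) => G E [_ HG] /=; case: (posnP G) => // Gp.
by have [i [slot _]] := HG Gp; case: (forkable_no_catalan_slot Fw slot).
Qed.

Local Open Scope ring_scope.

Section Potential.
Variables (R : realType) (eps : R).
Hypothesis eps_gt0 : 0 < eps.
Hypothesis eps_lt1 : eps < 1.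

(* [lra] and [nra] ignore section hypotheses, hence the [have := eps_gt0]
   steps below. *)
Definition p_adv := (1 - eps) / 2.
Definition gamma := (1 + eps)^-1.
Definition theta := 1 + eps ^+ 2 / 2.

Definition potential (s : nat * nat) : R := gamma ^+ s.1 * theta ^+ s.2.

(* One-step growth factors of the potential from the states [(G+1, E+1)],
   [(G+1, 0)], [(0, E+1)] and [(0, 0)]. *)
Definition ratio_GE := ((1 - p_adv) * gamma ^+ 2 + p_adv * theta ^+ 2) / (gamma * theta).
Definition ratio_G := ((1 - p_adv) * gamma ^+ 2 + p_adv * theta) / gamma.
Definition ratio_E := ((1 - p_adv) + p_adv * theta ^+ 2) / theta.
Definition ratio_0 := (1 - p_adv) * gamma + p_adv * theta.
Definition lambda := Num.max (Num.max ratio_GE ratio_G) (Num.max ratio_E ratio_0).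

Lemma gamma_gt0 : 0 < gamma. Proof. by rewrite /gamma invr_gt0; have := eps_gt0; lra. Qed.
Lemma gamma_le1 : gamma <= 1. Proof. by rewrite /gamma invf_le1; have := eps_gt0; lra. Qed.
Lemma theta_ge1 : 1 <= theta.
Proof. by rewrite lerDl divr_ge0 ?sqr_ge0. Qed.
Lemma theta_gt0 : 0 < theta. Proof. by have := theta_ge1; lra. Qed.
Lemma p_adv_le1 : p_adv <= 1. Proof. by rewrite /p_adv; have := eps_gt0; lra. Qed.

Lemma eps_sqr_lt : eps ^+ 2 < eps.
Proof. by rewrite expr2; have := eps_gt0; have := eps_lt1; nra. Qed.

Lemma ratio_GE_lt1 : ratio_GE < 1.
Proof.
rewrite /ratio_GE ltr_pdivrMr ?mulr_gt0 ?gamma_gt0 ?theta_gt0 // mul1r -subr_gt0.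
have -> : gamma * theta - ((1 - p_adv) * gamma ^+ 2 + p_adv * theta ^+ 2) =
    gamma ^+ 2 * ((1 + eps) / 2 * (eps ^+ 2 + 3/4 * eps ^+ 4 + 1/4 * eps ^+ 6)).
  by rewrite /gamma /theta /p_adv; field; have := eps_gt0; lra.
apply: mulr_gt0; first exact: exprn_gt0 gamma_gt0.
apply: mulr_gt0; first by have := eps_gt0; lra.
by have := exprn_gt0 2 eps_gt0; have := exprn_gt0 4 eps_gt0; have := exprn_gt0 6 eps_gt0; lra.
Qed.

Lemma ratio_G_lt1 : ratio_G < 1.
Proof.
rewrite /ratio_G ltr_pdivrMr ?gamma_gt0 // mul1r -subr_gt0.
have -> : gamma - ((1 - p_adv) * gamma ^+ 2 + p_adv * theta) =
    gamma ^+ 2 * ((1 + eps) / 2 * (eps ^+ 2 / 2 + eps ^+ 4 / 2)).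
  by rewrite /gamma /theta /p_adv; field; have := eps_gt0; lra.
apply: mulr_gt0; first exact: exprn_gt0 gamma_gt0.
apply: mulr_gt0; first by have := eps_gt0; lra.
by have := exprn_gt0 2 eps_gt0; have := exprn_gt0 4 eps_gt0; lra.
Qed.

Lemma ratio_E_lt1 : ratio_E < 1.
Proof.
rewrite /ratio_E ltr_pdivrMr ?theta_gt0 // mul1r -subr_gt0.
have -> : theta - ((1 - p_adv) + p_adv * theta ^+ 2) =
    eps ^+ 2 / 2 * (eps - eps ^+ 2 / 4 + eps ^+ 3 / 4).
  by rewrite /theta /p_adv; field.
apply: mulr_gt0; first by have := exprn_gt0 2 eps_gt0; lra.
by have := eps_gt0; have := eps_sqr_lt; have := exprn_gt0 3 eps_gt0; lra.
Qed.

Lemma ratio_0_lt1 : ratio_0 < 1.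
Proof.
rewrite -subr_gt0.
have -> : 1 - ratio_0 = gamma * ((1 + eps) / 2 * (eps - eps ^+ 2 / 2 + eps ^+ 3 / 2)).
  by rewrite /ratio_0 /gamma /theta /p_adv; field; have := eps_gt0; lra.
apply: mulr_gt0; first exact: gamma_gt0.
apply: mulr_gt0; first by have := eps_gt0; lra.
by have := eps_gt0; have := eps_sqr_lt; have := exprn_gt0 3 eps_gt0; lra.
Qed.

Lemma ratio_0_gt0 : 0 < ratio_0.
Proof.
have p0 : 0 < p_adv by rewrite /p_adv; have := eps_lt1; lra.
have := p_adv_le1; have := gamma_gt0; have := theta_gt0; rewrite /ratio_0; nra.
Qed.

Lemma lambda_lt1 : lambda < 1.
Proof. by rewrite !gt_max ratio_GE_lt1 ratio_G_lt1 ratio_E_lt1 ratio_0_lt1. Qed.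

Lemma lambda_gt0 : 0 < lambda.
Proof. by rewrite !lt_max ratio_0_gt0 !orbT. Qed.

Lemma potential_ge0 s : 0 <= potential s.
Proof. by rewrite mulr_ge0 // exprn_ge0 // ltW ?gamma_gt0 ?theta_gt0. Qed.

Lemma potential_ge1 E : 1 <= potential (0, E).
Proof. by rewrite /potential mul1r exprn_ege1 ?theta_ge1. Qed.

Lemma gamma_div_theta_le1 : gamma / theta <= 1.
Proof. by rewrite ler_pdivrMr ?theta_gt0 // mul1r (le_trans gamma_le1 theta_ge1). Qed.

Lemma theta_div_gamma_ge1 : 1 <= theta / gamma.
Proof. by rewrite ler_pdivlMr ?gamma_gt0 // mul1r (le_trans gamma_le1 theta_ge1). Qed.

Lemma potential_step_factors s : exists f t, [/\
  potential (step s false) = f * potential s, potential (step s true) = t * potential s,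
  f <= t & (1 - p_adv) * f + p_adv * t <= lambda].
Proof.
have g0 := lt0r_neq0 gamma_gt0; have t0 := lt0r_neq0 theta_gt0.
have gt := le_trans gamma_le1 theta_ge1.
have [rGE rG rE r0] : [/\ ratio_GE <= lambda, ratio_G <= lambda,
    ratio_E <= lambda & ratio_0 <= lambda] by rewrite !le_max !lexx !orbT.
case: s => [[|G] [|E]]; rewrite /potential /step /=.
- by exists gamma, theta; split => //; rewrite ?expr0 ?expr1; field.
- exists theta^-1, theta; split; rewrite ?exprS ?expr0; try by field.
    have ti : theta^-1 <= 1 by rewrite invf_le1 ?theta_gt0 ?theta_ge1.
    exact: le_trans ti theta_ge1.
  suff -> : (1 - p_adv) * theta^-1 + p_adv * theta = ratio_E by [].
  by rewrite /ratio_E; field.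
- exists gamma, (theta / gamma); split; rewrite ?exprS ?expr0; try by field.
    exact: le_trans gamma_le1 theta_div_gamma_ge1.
  suff -> : (1 - p_adv) * gamma + p_adv * (theta / gamma) = ratio_G by [].
  by rewrite /ratio_G; field.
- exists (gamma / theta), (theta / gamma); split; rewrite ?exprS; try by field.
    exact: le_trans gamma_div_theta_le1 theta_div_gamma_ge1.
  suff -> : (1 - p_adv) * (gamma / theta) + p_adv * (theta / gamma) = ratio_GE by [].
  by rewrite /ratio_GE; field; rewrite t0 g0.
Qed.

Lemma potential_step_le_adv s : potential (step s false) <= potential (step s true).
Proof.
have [f [t [-> -> ft _]]] := potential_step_factors s.
by apply: ler_wpM2r; [exact: potential_ge0 | exact: ft].
Qed.

Lemma potential_step_mean s :
  (1 - p_adv) * potential (step s false) + p_adv * potential (step s true) <=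
  lambda * potential s.
Proof.
have [f [t [-> -> _ mean]]] := potential_step_factors s.
rewrite mulrA [p_adv * _]mulrA -mulrDl.
by apply: ler_wpM2r; [exact: potential_ge0 | exact: mean].
Qed.
End Potential.

Section Expectation.
Variables (R : realType) (eps : R) (n : nat) (P : n.-tuple bool -> R).
Hypothesis P_distr : is_distr P.
Hypothesis P_mart : eps_martingale eps P.

Lemma P_ge0 w : 0 <= P w. Proof. by case: P_distr. Qed.

(* Partition by the prefix of length [t]; the martingale condition bounds each block. *)
Lemma sum_adv_bit_le t (d : seq bool -> R) : (t < n)%N -> (forall b, 0 <= d b) ->
  \sum_(w | wbit w t.+1) P w * d (take t w) <= p_adv eps * \sum_w P w * d (take t w).
Proof.
move=> tn d0; pose key (w : n.-tuple bool) := take_tuple t w.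
rewrite (partition_big key predT) //= [X in _ <= _ * X](partition_big key predT) //=.
rewrite mulr_sumr; apply: ler_sum => j _.
have keyE w : key w == j -> take t w = val j by move/eqP <-.
rewrite (eq_bigr (fun w => P w * d (val j))); last by move=> w /andP[_ /keyE ->].
rewrite [X in _ <= _ * X](eq_bigr (fun w => P w * d (val j))); last by move=> w /keyE ->.
rewrite -!big_distrl /= mulrA ler_wpM2r //.
have sj : size (val j) = t.+1.-1 by rewrite size_tuple; apply/minn_idPl/ltnW.
have rng : (0 < t.+1 <= n)%N by rewrite ltn0Sn tn.
have := P_mart rng sj.
have -> : \sum_(w : n.-tuple bool | (take t.+1.-1 w == val j) && wbit w t.+1) P w =
          \sum_(w : n.-tuple bool | wbit w t.+1 && (key w == j)) P w.
  by apply: eq_bigl => w; rewrite andbC.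
by [].
Qed.

Hypothesis eps_gt0 : 0 < eps.
Hypothesis eps_lt1 : eps < 1.

Lemma expected_potential_le t : (t <= n)%N ->
  \sum_w P w * potential eps (walk_state w t) <= lambda eps ^+ t.
Proof.
elim: t => [_|t IH tn].
  under eq_bigr => w _ do rewrite /walk_state take0 /potential /= !expr0 !mulr1.
  by rewrite (proj2 P_distr).
pose d b := potential eps (step (foldl step (0, 0) b) true) -
            potential eps (step (foldl step (0, 0) b) false).
have d0 b : 0 <= d b by rewrite subr_ge0 potential_step_le_adv.
rewrite (eq_bigr (fun w => P w * potential eps (step (walk_state w t) false) +
           (if wbit w t.+1 then P w * d (take t w) else 0))); last first.
  move=> w _; rewrite walk_stateS //; case: (wbit w t.+1); last by rewrite addr0.
  by rewrite /d /walk_state; ring.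
rewrite big_split -big_mkcond /=.
apply: le_trans (lerD (lexx _) (sum_adv_bit_le tn d0)) _.
rewrite mulr_sumr -big_split /= exprS.
apply: (le_trans (y := lambda eps * \sum_w P w * potential eps (walk_state w t))).
  rewrite mulr_sumr ler_sum // => w _.
  rewrite (_ : _ + _ = P w * ((1 - p_adv eps) * potential eps (step (walk_state w t) false)
      + p_adv eps * potential eps (step (walk_state w t) true))).
    rewrite [in X in _ <= X]mulrCA.
    by apply: ler_wpM2l; [exact: P_ge0 | exact: potential_step_mean].
  by rewrite /d /p_adv; ring.
by apply: ler_wpM2l; [exact/ltW/lambda_gt0 | exact: IH (ltnW tn)].
Qed.

Lemma prob_forkable_le : prob P (@forkable n) <= lambda eps ^+ n.
Proof.
apply: le_trans (expected_potential_le (leqnn n)).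
rewrite /prob big_mkcond /= ler_sum // => w _.
case: asboolP => [Fw|_]; last by rewrite mulr_ge0 ?P_ge0 ?potential_ge0.
rewrite -{1}[P w]mulr1 ler_wpM2l ?P_ge0 //.
by case: (walk_state w n) (forkable_walk_state Fw) => G E /= ->; apply: potential_ge1.
Qed.
End Expectation.

Theorem corollary2 (R : realType) (eps : R) (heps : 0 < eps < 1) :
  (forall (n : nat) (P : n.-tuple bool -> R),
      is_distr P -> eps_martingale eps P ->
      prob P (@forkable n) = prob P (@mu_nonneg n)) /\
  (exists c : R, 0 < c /\ exists N : nat, forall (n : nat) (P : n.-tuple bool -> R),
      (N <= n)%N -> is_distr P -> eps_martingale eps P ->
      prob P (@forkable n) <= expR (- (c * n%:R))).
Proof.
case/andP: heps => eps_gt0 eps_lt1; split.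
  move=> n P _ _; apply: eq_bigl => w.
  by apply/asboolP/asboolP => /forkable_iff_mu_nonneg.
have l0 := lambda_gt0 eps_gt0 eps_lt1; have l1 := lambda_lt1 eps_gt0 eps_lt1.
exists (- ln (lambda eps)); split; first by rewrite oppr_gt0 ln_lt0 // l0 l1.
exists 0%N => n P _ P_distr P_mart.
apply: le_trans (prob_forkable_le P_distr P_mart eps_gt0 eps_lt1) _.
by rewrite mulNr opprK mulrC expRM_natl lnK // posrE.
Qed.
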